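(* Let $f(\mathbf{x}) = \sum_{t=1}^T f_t(\mathbf{x})$ be a convex function on $\mathbb{R}^n$ whose components $f_t$ are all convex, and let $\mathbf{x}^*$ be a minimizer of $f$. Suppose $f$ is minimized by SGD, processing one component gradient $\nabla f_t$ per step, with the algorithm replicated across $P$ workers that synchronize at every step, under the Insignificance-bounded Synchronous Parallel (ISP) consistency model described in the context. The update at step $t$ is $\mathbf{u}_t := -\eta_t \nabla f_t(\widetilde{\mathbf{x}}_t)$, where $\widetilde{\mathbf{x}}_t = (\widetilde{x}_{1,t},\dots,\widetilde{x}_{n,t})$ is the noisy state seen by the worker performing step $t$ and the step size is $\eta_t = \eta/\sqrt{t}$ for a constant $\eta>0$. The per-parameter significance filter is $\left|\delta_{i,t}/\widetilde{x}_{i,t}\right| > v_t$, where $\delta_{i,t} := \sum_{t'=t_{p_i}}^{t} u_{i,t'}$ is the accumulated update of the $i$-th parameter since its last propagation time $t_{p_i}$, and the threshold is $v_t = v/\sqrt{t}$ for a constant $v \ge 0$. Assume the $f_t$ are $L$-Lipschitz and that $D(\mathbf{x},\mathbf{x}') := \tfrac12\|\mathbf{x}-\mathbf{x}'\|^2 \le \Delta^2$ for all $\mathbf{x},\mathbf{x}'$ in the parameter space, for some constant $\Delta$. Then the regret \[ R[X] := \sum_{t=1}^T \big( f_t(\widetilde{\mathbf{x}}_t) - f_t(\mathbf{x}^* ) \big) = \mathcal{O}\big(\sqrt{T}\big), \] and consequently $\lim_{T\to\infty} R[X]/T = 0$.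
   Context: ISP consistency model: each worker keeps a local replica of the model. After computing its update at a step, a worker adds it to its local accumulated update for each parameter; for parameter $i$, if the accumulated update $\delta_{i,t}$ (sum of that worker's updates to parameter $i$ since it last propagated parameter $i$, at time $t_{p_i}$) satisfies $|\delta_{i,t}/\widetilde{x}_{i,t}| > v_t$, it is significant and is broadcast to (and applied by) all other workers, and the accumulation restarts; otherwise it remains local to the worker. Steps are ordered as follows: step $t$ is performed by worker $p = t \bmod P$ at logical clock $c = \lfloor t/P \rfloor$, and $\mathbf{u}_t =: \mathbf{u}_{p,c}$. The noisy view of worker $p$ at clock $c$ is $\widetilde{\mathbf{x}}_{p,c} = \mathbf{x}_0 + \sum_{c'=0}^{c} \mathbf{u}_{p,c'} + \sum_{p'\neq p}\sum_{i\in\mathcal{S}_{p',c}} \mathbf{u}_i$, where $\mathbf{x}_0$ is the initial parameter vector and $\mathcal{S}_{p',c}$ is the set of significant updates propagated by worker $p'$ up through clock $c$; $\widetilde{\mathbf{x}}_t := \widetilde{\mathbf{x}}_{t \bmod P,\lfloor t/P\rfloor}$. $\|\cdot\|$ is the Euclidean norm. $L$-Lipschitz is used in the sense that gradients satisfy $\|\nabla f_t\|\le L$. *)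

From HB Require Import structures.
From mathcomp Require Import all_boot all_order all_algebra.
From mathcomp Require Import all_classical all_reals all_analysis.
Set Implicit Arguments. Unset Strict Implicit. Unset Printing Implicit Defensive.
Import Order.TTheory GRing.Theory Num.Theory.
Import numFieldNormedType.Exports.
Local Open Scope ring_scope.

Section ISP.
Variables (R : realType) (n : nat).
Local Notation vec := 'rV[R]_n.

Definition dotv (x y : vec) : R := \sum_(i < n) x 0 i * y 0 i.
Definition enorm (x : vec) : R := Num.sqrt (dotv x x).

Definition Dist (x y : vec) : R := 2^-1 * enorm (x - y) ^+ 2.

Definition convex_fun (h : vec -> R) : Prop :=
  forall (x y : vec) (l : R), 0 <= l -> l <= 1 ->
    h (l *: x + (1 - l) *: y) <= l * h x + (1 - l) * h y.

Definition is_gradient (h : vec -> R) (gr : vec -> vec) : Prop :=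
  forall x w : vec, derivable h x w /\ 'D_w h x = dotv (gr x) w.

(* State after some number of steps: for each worker p (a nat, only
   p < P is used), its local replica [view p] and its pending (not yet
   propagated) accumulated update [acc p] for every parameter. *)
Record isp_state := ISPState { view : nat -> vec; acc : nat -> vec }.

Variables (P : nat) (x0 : vec) (grad : nat -> vec -> vec) (eta v : R).

Definition step_size (t : nat) : R := eta / Num.sqrt (t%:R).
Definition threshold (t : nat) : R := v / Num.sqrt (t%:R).

(* Step t (t >= 1) is performed by worker t mod P, reading its replica
   xt (the noisy view x~_t), computing u_t = - eta_t grad f_t (xt),
   applying u_t locally, adding it to its accumulators, and broadcasting
   (to all other workers) exactly those accumulated coordinates i with
   |delta_i / x~_{i,t}| > v_t, written |delta_i| > v_t |x~_{i,t}| (so a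
   zero coordinate of the view makes any nonzero delta significant);
   broadcast accumulators are reset to 0. *)
Definition isp_step (t : nat) (s : isp_state) : isp_state :=
  let p := (t %% P)%N in
  let xt := view s p in
  let u := - (step_size t) *: grad t xt in
  let a := acc s p + u in
  let sig (i : 'I_n) := threshold t * `|xt 0 i| < `|a 0 i| in
  ISPState
    (fun q => if q == p then view s p + u
              else view s q + \row_i (if sig i then a 0 i else 0))
    (fun q => if q == p then \row_i (if sig i then 0 else a 0 i)
              else acc s q).

Definition isp_init : isp_state := ISPState (fun _ => x0) (fun _ => 0).

Fixpoint isp_after (k : nat) : isp_state :=
  match k with
  | O => isp_init
  | S k' => isp_step k'.+1 (isp_after k')
  end.

Definition noisy (t : nat) : vec := view (isp_after t.-1) (t %% P)%N.

Definition upd (t : nat) : vec := - (step_size t) *: grad t (noisy t).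

Definition true_state (t : nat) : vec := x0 + \sum_(1 <= s < t) upd s.

Definition regret (f : nat -> vec -> R) (T : nat) (xs : vec) : R :=
  \sum_(1 <= t < T.+1) (f t (noisy t) - f t xs).

End ISP.

From HB Require Import structures.
From mathcomp Require Import all_boot all_order all_algebra.
From mathcomp Require Import all_classical all_reals all_analysis.
From mathcomp Require Import lra ring zify.
Set Implicit Arguments. Unset Strict Implicit. Unset Printing Implicit Defensive.
Import Order.TTheory GRing.Theory Num.Theory.
Import numFieldNormedType.Exports.
Local Open Scope classical_set_scope.
Local Open Scope ring_scope.

(* The true state [x_t = x0 + u_1 + ... + u_(t-1)] performs exact gradient steps, with the
   gradient read at the noisy view [x~_t].  Their difference is made of updates still pending
   in the workers' accumulators; a pending accumulator was last written less than [P] steps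
   ago, at some step [s], and failed the significance test then, so its coordinates are at
   most [v_s M], where [M] bounds the coordinates of every replica (by the diameter of the
   parameter space).  The noise is thus [O(1/sqrt t)] per coordinate, and the usual online
   gradient descent analysis with step [eta/sqrt t] (telescoping [D(x_t, x* )] and summing
   [1/sqrt t <= 2 sqrt T]) bounds the regret by [O(sqrt T)].  The bound holds against any
   comparator in the parameter space. *)

Section Euclidean.
Variables (R : realType) (n : nat).
Implicit Types x y z g : 'rV[R]_n.

Lemma dotvDr x y z : dotv x (y + z) = dotv x y + dotv x z.
Proof. by rewrite /dotv -big_split; apply: eq_bigr => i _; rewrite mxE mulrDr. Qed.

Lemma dotv_ge0 x : 0 <= dotv x x.
Proof. by apply: sumr_ge0 => i _; rewrite -expr2 sqr_ge0. Qed.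

Lemma enorm_ge0 x : 0 <= enorm x.
Proof. exact: sqrtr_ge0. Qed.

Lemma enorm_sqr x : enorm x ^+ 2 = dotv x x.
Proof. by rewrite sqr_sqrtr // dotv_ge0. Qed.

Lemma Dist_ge0 x y : 0 <= Dist x y.
Proof. by rewrite mulr_ge0 ?sqr_ge0. Qed.

Lemma norm_coord_le_enorm x i : `|x 0 i| <= enorm x.
Proof.
rewrite -sqrtr_sqr ler_sqrt ?dotv_ge0 // /dotv (bigD1 i) //= -expr2 lerDl.
by apply: sumr_ge0 => j _; rewrite -expr2 sqr_ge0.
Qed.

Lemma dotv_le_coord_bounds x y (a b : R) :
  (forall i, `|x 0 i| <= a) -> (forall i, `|y 0 i| <= b) -> dotv x y <= n%:R * (a * b).
Proof.
move=> xa yb; rewrite -[n in n%:R]card_ord mulr_natl -sumr_const /dotv.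
apply: ler_sum => i _; rewrite (le_trans (ler_norm _)) // normrM.
exact: ler_pM.
Qed.

Lemma Dist_subZ y z g s :
  Dist (y - s *: g) z = Dist y z - s * dotv g (y - z) + s ^+ 2 / 2 * dotv g g.
Proof.
rewrite /Dist !enorm_sqr /dotv !mulr_sumr -!(sumrN, big_split) /=.
by apply: eq_bigr => i _; rewrite !mxE; field.
Qed.

Lemma norm_coord_le_Dist x y d i :
  Dist x y <= d -> `|x 0 i| <= enorm y + Num.sqrt (2 * d).
Proof.
move=> xy_le; have xy_sqr : enorm (x - y) ^+ 2 <= 2 * d by rewrite /Dist in xy_le; lra.
have xy_i := norm_coord_le_enorm (x - y) i; rewrite !mxE in xy_i.
have y_i := norm_coord_le_enorm y i.
have := ler_normD (y 0 i) (x 0 i - y 0 i); rewrite addrC subrK.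
have : enorm (x - y) <= Num.sqrt (2 * d).
  by rewrite -(ger0_norm (enorm_ge0 _)) -sqrtr_sqr ler_sqrt // (le_trans (sqr_ge0 _) xy_sqr).
lra.
Qed.

End Euclidean.

Section Convex.
Variables (R : realType) (n : nat) (h : 'rV[R]_n -> R).
Hypothesis h_convex : convex_fun h.

(* By convexity every difference quotient with step in [(0, 1]] is at most [h (x + w) - h x]. *)
Lemma convex_derive_le x w : derivable h x w -> 'D_w h x <= h (x + w) - h x.
Proof.
move=> dh; rewrite /derive; set q := (fun s : R => _).
have q_right : q @ 0^'+ --> lim (q @ 0^').
  apply: cvg_trans dh => A /= [e e0 He].
  by exists e => // y /= ey y0; apply: He => //; rewrite gt_eqF.
apply: (cvgr_to_le q_right); near=> s.
have s0 : 0 < s by near: s; exact: nbhs_right_gt.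
have s1 : s <= 1 by near: s; apply: nbhs_right_le; exact: ltr01.
rewrite /q /= ler_pdivrMl //.
have := h_convex (x + w) x (ltW s0) s1.
have -> : s *: (x + w) + (1 - s) *: x = s *: w + x.
  by rewrite scalerDr scalerBl scale1r addrC addrA subrK addrC.
rewrite [x + w]addrC; lra.
Unshelve. all: by end_near.
Qed.

Variable gr : 'rV[R]_n -> 'rV[R]_n.
Hypothesis h_gradient : is_gradient h gr.

Lemma convex_gradient_le x y : h x - h y <= dotv (gr x) (x - y).
Proof.
have [dh dhE] := h_gradient x (y - x).
have := convex_derive_le dh; rewrite dhE (addrC x) subrK.
have -> : x - y = - (y - x) by rewrite opprB.
have -> : dotv (gr x) (- (y - x)) = - dotv (gr x) (y - x).
  by rewrite /dotv -sumrN; apply: eq_bigr => i _; rewrite mxE mulrN.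
lra.
Qed.

Lemma convex_gradient_step_le x y z s L : 0 < s -> enorm (gr x) <= L ->
  h x - h z <=
  (Dist y z - Dist (y - s *: gr x) z) / s + s * L ^+ 2 / 2 + dotv (gr x) (x - y).
Proof.
move=> s0 grL; set g := gr x.
have gg : dotv g g <= L ^+ 2.
  by rewrite -enorm_sqr; have := enorm_ge0 g; nra.
have -> : (Dist y z - Dist (y - s *: g) z) / s = dotv g (y - z) - s / 2 * dotv g g.
  by rewrite Dist_subZ; field; rewrite gt_eqF.
have := convex_gradient_le x z.
have -> : dotv g (x - z) = dotv g (x - y) + dotv g (y - z).
  by rewrite -dotvDr addrA subrK.
have : 0 <= s / 2 * (L ^+ 2 - dotv g g) by apply: mulr_ge0; lra.
lra.
Qed.

End Convex.

Section RealSums.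
Variable R : realType.

Lemma sum_telescope_weighted_le (a w : nat -> R) (D : R) :
  (forall t, (1 <= t)%N -> a t <= D) -> 0 <= w 0%N -> (forall t, w t <= w t.+1) ->
  forall T, \sum_(1 <= t < T.+1) (a t - a t.+1) * w t <= (D - a T.+1) * w T.
Proof.
move=> aD w0 wS; elim=> [|T IH]; first by rewrite big_geq // mulr_ge0 ?subr_ge0 ?aD.
rewrite big_nat_recr //=.
have : (D - a T.+1) * w T <= (D - a T.+1) * w T.+1 by rewrite ler_wpM2l ?subr_ge0 ?aD.
lra.
Qed.

Lemma sum_inv_sqrt_le T : \sum_(1 <= t < T.+1) (Num.sqrt (t%:R : R))^-1 <= 2 * Num.sqrt T%:R.
Proof.
elim: T => [|T IH]; first by rewrite big_geq // sqrtr0 mulr0.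
rewrite big_nat_recr //=.
set A := Num.sqrt (T%:R : R) in IH *; set B := Num.sqrt (T.+1%:R : R).
have A0 : 0 <= A by apply: sqrtr_ge0.
have B0 : 0 < B by rewrite sqrtr_gt0 ltr0Sn.
have AB : A <= B by rewrite ler_sqrt // ler_nat.
have eB : B ^+ 2 = A ^+ 2 + 1 by rewrite !sqr_sqrtr // -?natr1 // ?ler0n.
(* [(B - A) (B + A) = 1] and [A <= B] *)
have : B^-1 <= 2 * (B - A) by rewrite -div1r ler_pdivrMr //; nra.
lra.
Qed.

Lemma sqrt_le_eventually (C eps : R) : 0 < eps ->
  exists N : nat, forall T : nat, (N <= T)%N -> C * Num.sqrt T%:R <= eps * T%:R.
Proof.
move=> eps_gt0; exists (Num.truncn (C ^+ 2 / eps ^+ 2)).+1 => T NT.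
set S := Num.sqrt (T%:R : R).
have S0 : 0 <= S by apply: sqrtr_ge0.
have eS : S ^+ 2 = T%:R by rewrite sqr_sqrtr // ler0n.
have C_sqr_lt : C ^+ 2 < eps ^+ 2 * T%:R.
  have N_le_T : ((Num.truncn (C ^+ 2 / eps ^+ 2)).+1%:R : R) <= T%:R by rewrite ler_nat.
  have := lt_le_trans (truncnS_gt _) N_le_T.
  by rewrite ltr_pdivrMr ?exprn_gt0 // mulrC.
have C_le : C <= eps * S.
  have epsS0 : 0 <= eps * S by rewrite mulr_ge0 // ltW.
  rewrite leNgt; apply/negP => ltC; nra.
by rewrite -eS expr2 mulrA ler_wpM2r.
Qed.

Lemma sum_telescope_sqrt_le (r a : nat -> R) (c D K : R) : 0 < c -> 0 <= K ->
  (forall t, (1 <= t)%N -> 0 <= a t <= D) ->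
  (forall t, (1 <= t)%N -> r t <= (a t - a t.+1) * (Num.sqrt t%:R / c) + K / Num.sqrt t%:R) ->
  forall T, \sum_(1 <= t < T.+1) r t <= (D / c + 2 * K) * Num.sqrt T%:R.
Proof.
move=> c_gt0 K_ge0 a_bnd r_le T; set w := fun t : nat => Num.sqrt (t%:R : R) / c.
apply: (@le_trans _ _ (\sum_(1 <= t < T.+1) ((a t - a t.+1) * w t + K / Num.sqrt t%:R))).
  by apply: ler_sum_nat => t /andP[/r_le].
rewrite big_split /= -mulr_sumr mulrDl; apply: lerD; last first.
  by rewrite [2 * K]mulrC -mulrA ler_wpM2l // sum_inv_sqrt_le.
apply: le_trans (sum_telescope_weighted_le (D := D) (w := w) _ _ _ T) _.
- by move=> t /a_bnd /andP[].
- by rewrite /w sqrtr0 mul0r.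
- by move=> t; rewrite /w ler_wpM2r ?invr_ge0 ?(ltW c_gt0) // ler_sqrt // ler_nat.
- have /andP[aT_ge0 _] := a_bnd T.+1 isT.
  have -> : D / c * Num.sqrt T%:R = D * w T by rewrite /w mulrAC -mulrA.
  by rewrite ler_wpM2r ?divr_ge0 ?sqrtr_ge0 ?(ltW c_gt0) // gerBl.
Qed.

End RealSums.

Lemma sum_ord_if_eq (V : zmodType) m (F : nat -> V) p (y : V) : (p < m)%N ->
  \sum_(r < m) (if (r : nat) == p then y else F r) = \sum_(r < m) F r - F p + y.
Proof.
move=> pm; rewrite (bigD1 (Ordinal pm)) //= eqxx [in RHS](bigD1 (Ordinal pm)) //=.
rewrite [F p + _]addrC addrK [in LHS]addrC; congr (_ + _).
by apply: eq_bigr => r rp; rewrite (ifN _ _ rp).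
Qed.

Section ISP.
Variables (R : realType) (n P : nat) (grad : nat -> 'rV[R]_n -> 'rV[R]_n).
Variables (x0 : 'rV[R]_n) (eta v : R).
Hypothesis P_gt0 : (0 < P)%N.

Local Notation state k := (isp_after P x0 grad eta v k).
Local Notation xtrue := (true_state P x0 grad eta v).
Local Notation xnoisy := (noisy P x0 grad eta v).

Lemma true_stateS k : xtrue k.+2 = xtrue k.+1 + upd P x0 grad eta v k.+1.
Proof. by rewrite /true_state big_nat_recr //= addrA. Qed.

(* Every update is either applied everywhere or pending in the accumulator of the worker
   that made it; a replica misses exactly the updates pending at the other workers. *)
Lemma view_isp_after k q : (q < P)%N ->
  view (state k) q = xtrue k.+1 - \sum_(r < P) acc (state k) r + acc (state k) q.
Proof.
elim: k q => [|k IH] q qP.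
  by rewrite /= /true_state big_geq // big1 // addr0 subr0 addr0.
have pP : (k.+1 %% P < P)%N by rewrite ltn_pmod.
rewrite true_stateS.
change (state k.+1) with (isp_step P grad eta v k.+1 (state k)).
rewrite /isp_step /= (sum_ord_if_eq _ _ pP).
set p := (k.+1 %% P)%N; set u := - step_size eta k.+1 *: grad k.+1 (view (state k) p).
rewrite -[upd _ _ _ _ _ _]/u.
case: ifP => _; rewrite [view (state k) _]IH //; apply/rowP => i; rewrite !mxE.
  lra.
by case: ifP => _; lra.
Qed.

Variable M : R.
Hypotheses (v_ge0 : 0 <= v) (M_ge0 : 0 <= M).
Hypothesis view_le : forall k p, (p < P)%N -> forall i, `|view (state k) p 0 i| <= M.

(* A nonzero accumulator of worker [r] was last written at a step [s] of [r] less than [P]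
   steps ago, and each of its coordinates then failed the significance test. *)
Lemma acc_isp_after k r : (r < P)%N -> acc (state k) r = 0 \/
  exists s, [/\ (0 < s)%N, (s %% P = r)%N, (k < s + P)%N &
    forall i, `|acc (state k) r 0 i| <= threshold v s * M].
Proof.
have thr_ge0 s : 0 <= threshold v s by rewrite divr_ge0 ?sqrtr_ge0.
elim: k r => [|k IH] r rP; first by left.
change (state k.+1) with (isp_step P grad eta v k.+1 (state k)); rewrite /isp_step /=.
case: ifP => [/eqP rE | rNE].
  right; exists k.+1; split => //; first lia.
  move=> i; rewrite mxE; case: ifP => [_ | /negbT]; first by rewrite normr0 mulr_ge0.
  by rewrite -leNgt => /le_trans; apply; rewrite ler_wpM2l // view_le // ltn_pmod.
have [-> | [s [s_gt0 sr ks acc_le]]] := IH r rP; [by left | right; exists s; split=> //].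
have : k.+1 != (s + P)%N by apply: contraFneq rNE => ->; rewrite modnDr sr.
lia.
Qed.

Lemma acc_isp_after_le k r i : (r < P)%N ->
  `|acc (state k) r 0 i| <= v * M * Num.sqrt P.+1%:R / Num.sqrt k.+1%:R.
Proof.
have sk_gt0 : 0 < Num.sqrt (k.+1%:R : R) by rewrite sqrtr_gt0 ltr0Sn.
move=> rP; have [-> | [s [s_gt0 _ ks acc_le]]] := acc_isp_after k rP.
  by rewrite mxE normr0 divr_ge0 ?mulr_ge0 ?sqrtr_ge0.
apply: le_trans (acc_le i) _; rewrite /threshold mulrAC -!mulrA ler_wpM2l //.
rewrite ler_wpM2l // ler_pdivlMr // mulrC ler_pdivrMr ?sqrtr_gt0 ?ltr0n //.
(* [k < s + P] gives [k + 1 <= s (P + 1)] *)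
by rewrite -sqrtrM // ler_sqrt // -natrM ler_nat; nia.
Qed.

Lemma noisy_sub_true_state_le k i : `|(xnoisy k.+1 - xtrue k.+1) 0 i| <=
  P.+1%:R * (v * M * Num.sqrt P.+1%:R / Num.sqrt k.+1%:R).
Proof.
set B := v * M * _ / _; have pP : (k.+1 %% P < P)%N by rewrite ltn_pmod.
rewrite /noisy /= view_isp_after // !mxE !summxE; set T := x0 0 i + _.
set A := acc _ _ 0 i; set S := \sum_(r < P) _.
have -> : T - S + A - T = A - S by ring.
have sum_le : `|\sum_(r < P) acc (state k) r 0 i| <= P%:R * B.
  rewrite -[P in P%:R]card_ord mulr_natl -sumr_const.
  apply: le_trans (ler_norm_sum _ _ _) (ler_sum _ _) => r _.
  exact: acc_isp_after_le.
have := acc_isp_after_le k i pP; rewrite -/B -/A.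
have := ler_normB A S.
rewrite -natr1; lra.
Qed.

Lemma isp_regret_step (f : 'rV[R]_n -> R) L xs k : 0 < eta ->
  convex_fun f -> is_gradient f (grad k.+1) -> (forall x, enorm (grad k.+1 x) <= L) ->
  f (xnoisy k.+1) - f xs <=
  (Dist (xtrue k.+1) xs - Dist (xtrue k.+2) xs) * (Num.sqrt k.+1%:R / eta)
  + (eta * L ^+ 2 / 2 + n%:R * L * P.+1%:R * (v * M * Num.sqrt P.+1%:R)) / Num.sqrt k.+1%:R.
Proof.
move=> eta_gt0 f_convex f_grad grad_le.
set r := Num.sqrt (k.+1%:R : R); set g := grad k.+1 (xnoisy k.+1).
have r_gt0 : 0 < r by rewrite sqrtr_gt0 ltr0Sn.
have step_gt0 : 0 < step_size eta k.+1 by rewrite divr_gt0.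
have := convex_gradient_step_le f_convex f_grad (xtrue k.+1) xs step_gt0
  (grad_le (xnoisy k.+1)).
have -> : xtrue k.+1 - step_size eta k.+1 *: g = xtrue k.+2.
  by rewrite true_stateS /upd scaleNr.
have := dotv_le_coord_bounds (fun i => le_trans (norm_coord_le_enorm g i) (grad_le _))
  (noisy_sub_true_state_le k).
rewrite /step_size invf_div -/r -/g.
have -> : (eta * L ^+ 2 / 2 + n%:R * L * P.+1%:R * (v * M * Num.sqrt P.+1%:R)) / r =
  eta / r * L ^+ 2 / 2 + n%:R * (L * (P.+1%:R * (v * M * Num.sqrt P.+1%:R / r))).
  by field; rewrite gt_eqF.
lra.
Qed.

Lemma isp_regret_le (f : nat -> 'rV[R]_n -> R) L Delta xs T : 0 < eta ->
  (forall t, (1 <= t)%N -> convex_fun (f t)) ->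
  (forall t, (1 <= t)%N -> is_gradient (f t) (grad t)) ->
  (forall t x, (1 <= t)%N -> enorm (grad t x) <= L) ->
  (forall t, (1 <= t)%N -> Dist (xtrue t) xs <= Delta) ->
  regret P x0 grad eta v f T xs <=
  (Delta / eta + 2 * (eta * L ^+ 2 / 2 + n%:R * L * P.+1%:R * (v * M * Num.sqrt P.+1%:R)))
  * Num.sqrt T%:R.
Proof.
move=> eta_gt0 f_convex f_grad grad_le Dist_le.
have L_ge0 : 0 <= L := le_trans (enorm_ge0 _) (grad_le 1%N x0 isT).
apply: (sum_telescope_sqrt_le (a := fun t => Dist (xtrue t) xs)) => //.
- by rewrite addr_ge0 ?mulr_ge0 ?divr_ge0 ?sqrtr_ge0 ?sqr_ge0 ?ler0n // ltW.
- by move=> t t_ge1; rewrite Dist_ge0 Dist_le.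
- move=> [//|k] _; apply: isp_regret_step => //; [exact: f_convex | exact: f_grad |].
  by move=> x; exact: grad_le.
Qed.

End ISP.

Theorem theorem1 (R : realType) (n P : nat) (f : nat -> 'rV[R]_n -> R)
  (grad : nat -> 'rV[R]_n -> 'rV[R]_n) (x0 : 'rV[R]_n)
  (eta v L Delta : R) (X : set 'rV[R]_n) :
  (0 < P)%N ->
  0 < eta -> 0 <= v ->
  (forall t, (1 <= t)%N -> convex_fun (f t)) ->
  (forall t, (1 <= t)%N -> is_gradient (f t) (grad t)) ->
  (forall t x, (1 <= t)%N -> enorm (grad t x) <= L) ->
  (forall x y, X x -> X y -> Dist x y <= Delta ^+ 2) ->
  (* every model state produced by the algorithm lies in the parameter space:
     all workers' replicas at all times and the global states *)
  (forall k p, (p < P)%N -> X (view (isp_after P x0 grad eta v k) p)) ->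
  (forall t, (1 <= t)%N -> X (true_state P x0 grad eta v t)) ->
  exists C : R,
    (forall (T : nat) (xs : 'rV[R]_n), (1 <= T)%N -> X xs ->
       (forall y, \sum_(1 <= t < T.+1) f t xs <= \sum_(1 <= t < T.+1) f t y) ->
       regret P x0 grad eta v f T xs <= C * Num.sqrt (T%:R))
    /\
    (forall xs : nat -> 'rV[R]_n,
       (forall T, (1 <= T)%N -> X (xs T) /\
          forall y, \sum_(1 <= t < T.+1) f t (xs T) <= \sum_(1 <= t < T.+1) f t y) ->
       forall eps : R, 0 < eps -> exists N : nat, forall T : nat, (N <= T)%N -> (1 <= T)%N ->
         regret P x0 grad eta v f T (xs T) / T%:R <= eps).
Proof.
move=> P_gt0 eta_gt0 v_ge0 f_convex f_grad grad_le diam_le view_in true_in.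
set M := enorm x0 + Num.sqrt (2 * Delta ^+ 2).
have M_ge0 : 0 <= M by rewrite addr_ge0 ?enorm_ge0 ?sqrtr_ge0.
have x0_in : X x0 := view_in 0%N 0%N P_gt0.
have view_le k p (pP : (p < P)%N) i : `|view (isp_after P x0 grad eta v k) p 0 i| <= M.
  exact: norm_coord_le_Dist (diam_le _ _ (view_in k p pP) x0_in).
set C := Delta ^+ 2 / eta
  + 2 * (eta * L ^+ 2 / 2 + n%:R * L * P.+1%:R * (v * M * Num.sqrt P.+1%:R)).
have regret_le T xs : X xs -> regret P x0 grad eta v f T xs <= C * Num.sqrt T%:R.
  move=> xs_in; apply: isp_regret_le => // t t_ge1.
  exact: diam_le (true_in t t_ge1) xs_in.
exists C; split=> [T xs _ xs_in _ | xs xs_min eps eps_gt0]; first exact: regret_le.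
have [N N_le] := sqrt_le_eventually C eps_gt0.
exists N => T NT T_ge1; rewrite ler_pdivrMr ?ltr0n //.
exact: le_trans (regret_le T (xs T) (xs_min T T_ge1).1) (N_le T NT).
Qed.
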